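(* Let $\mathcal{C}=\{c_a : a\in\mathcal{A}^*\}$ be a uniform family of quantum circuits (Alice's quantum computer), and let Bob possess a classical simulation scheme for $\mathcal{C}$. Consider the hypothesis testing scenario described in the context. Then Bob's scheme is an $\epsilon$-simulator of $\mathcal{C}$ if and only if, in this hypothesis testing scenario, there exists a strategy for Bob which jointly achieves indistinguishability and efficiency.
   Context: A uniform family of quantum circuits is $\mathcal{C}=\{c_a : a\in\mathcal{A}^*\}$, indexed by finite strings $a$ over a finite alphabet $\mathcal{A}$, with an efficiently computable map from $a$ to the circuit; $c_a$ acts on $n_a$ qubits, its size and description length are bounded by $\mathrm{poly}(n_a)$, and measuring it yields an outcome in $\{0,1\}^{k_a}$ distributed according to the Born-rule distribution $\mathcal{P}_a$. For distributions $\mathcal{P},\mathcal{P}'$ on a finite set, $\|\mathcal{P}-\mathcal{P}'\|_1=\sum_x|\mathcal{P}(x)-\mathcal{P}'(x)|$, and $B(\mathcal{P},\epsilon)$ is the set of distributions within $L_1$ distance $\epsilon$ of $\mathcal{P}$. A classical (randomized) algorithm is an $\epsilon$-simulator of $\mathcal{C}$ if for every $\epsilon>0$ and every $a\in\mathcal{A}^*$ it outputs a sample from some distribution $\mathcal{P}^\epsilon_a\in B(\mathcal{P}_a,\epsilon)$ in run-time $O(\mathrm{poly}(n_a,1/\epsilon))$. Hypothesis testing scenario: one of Alice or Bob is chosen uniformly at random as ''the candidate''. A referee with unbounded computational power, not knowing the candidate's identity, runs a finite interactive protocol: in each round the referee sends a circuit index $a\in\mathcal{A}^*$ (chosen as a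 function of all previously collected requests and responses), and the candidate returns an outcome; Alice returns a sample from $\mathcal{P}_a$ by running $c_a$, Bob returns the output of his strategy (his response in a round may depend only on the current request and the round number). The referee's rules for choosing requests, for halting, and for deciding between $H_a$ (''data came from Alice'') and $H_b$ (''data came from Bob'') constitute the test; $P_{correct}$ is the probability the referee decides correctly. Bob's strategy may depend on a parameter $\delta>0$; when he uses his simulator, in round $j$ he chooses an accuracy parameter $\epsilon_j$ and his cost in that round is $t_j=\mathrm{poly}(n_{a_j},1/\epsilon_j)$. For a request sequence $\alpha=(a_1,\dots,a_m)$, Alice's resource cost is $N(\alpha)=n_{a_1}+\dots+n_{a_m}$ and Bob's is $T(\alpha)=t_1+\dots+t_m$. Indistinguishability: for every $\delta>0$ and every test, $P_{correct}<\frac12+\delta$. Efficiency: there is a polynomial $f$ such that for all $\delta>0$ and all request sequences $\alpha$, $T(\alpha)\le f(N(\alpha),1/\delta)$.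
   Formalization: An ε-simulator is a scheme for which some rule, depending on ε and a, sets its accuracy parameter so that it samples from a distribution in $B(\mathcal{P}_a,\epsilon)$ in run-time $O(\mathrm{poly}(n_a,1/\epsilon))$, instead of running with parameter ε itself. The paper assumes this as well. *)

From HB Require Import structures.
From mathcomp Require Import all_boot all_order all_algebra.
From mathcomp Require Import complex.
Set Implicit Arguments. Unset Strict Implicit. Unset Printing Implicit Defensive.
Import Order.TTheory GRing.Theory Num.Theory.
Local Open Scope ring_scope.

Definition bits (m : nat) := (m.-tuple bool).

Definition is_dist (R : numDomainType) (T : finType) (P : {ffun T -> R}) :=
  (forall x, 0 <= P x) /\ \sum_x P x = 1.

Definition L1 (R : numDomainType) (T : finType) (P Q : {ffun T -> R}) : R :=
  \sum_x `|P x - Q x|.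

(* evaluation of a bivariate polynomial f(x,y) (inner variable x, outer y) *)
Definition eval2 (R : comNzRingType) (f : {poly {poly R}}) (x y : R) : R :=
  (f.[y%:P]).[x].

Section Quantum.
Variable R : rcfType.
Local Notation C := R[i].

(* an operator on n qubits, as a matrix indexed by computational basis states:
   U (y, x) = <y|U|x> *)
Definition qop (n : nat) := {ffun bits n * bits n -> C}.

Definition unitary n (U : qop n) : Prop :=
  forall x y : bits n,
    \sum_z (conjc (U (z, x))) * U (z, y) = (x == y)%:R.

(* U acts non-trivially on at most the two qubits i, j *)
Definition agree_off n (i j : 'I_n) (x y : bits n) :=
  forall l : 'I_n, l != i -> l != j -> tnth x l = tnth y l.

Definition two_local n (U : qop n) : Prop :=
  exists i j : 'I_n,
    (forall x y, ~ agree_off i j y x -> U (y, x) = 0) /\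
    (forall x y x' y', agree_off i j y x -> agree_off i j y' x' ->
        tnth x i = tnth x' i -> tnth x j = tnth x' j ->
        tnth y i = tnth y' i -> tnth y j = tnth y' j ->
        U (y, x) = U (y', x')).

(* a circuit: qn qubits initialised in |0...0>, a sequence of gates
   (applied left to right), then measurement of the first qk qubits *)
Record qcircuit := QCircuit {
  qn : nat;
  qk : nat;
  gates : seq (qop qn) }.

Definition wf_circuit (c : qcircuit) : Prop :=
  (qk c <= qn c)%N /\
  (forall U, U \in gates c -> unitary U /\ two_local U).

Definition qsize (c : qcircuit) : nat := size (gates c).

Definition apply_op n (U : qop n) (psi : {ffun bits n -> C}) : {ffun bits n -> C} :=
  [ffun y => \sum_x U (y, x) * psi x].

Definition zero_state n : {ffun bits n -> C} :=
  [ffun x => if x == [tuple of nseq n false] then 1 else 0].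

Definition final_state (c : qcircuit) : {ffun bits (qn c) -> C} :=
  foldl (fun psi U => apply_op U psi) (zero_state (qn c)) (gates c).

Definition sqnorm (z : C) : R := (complex.Re z) ^+ 2 + (complex.Im z) ^+ 2.

Definition born (c : qcircuit) : {ffun bits (qk c) -> R} :=
  [ffun x : bits (qk c) =>
     \sum_(y : bits (qn c) | take (qk c) y == val x) sqnorm (final_state c y)].

End Quantum.

Section Testing.
Variables (Sig : finType) (k : seq Sig -> nat).

(* one collected (request, response) pair *)
Definition hitem := {a : seq Sig & bits (k a)}.

(* A test: the referee plays at most t_len rounds; t_next maps the history
   to the next request (None = halt); t_dec decides, true = H_a ("Alice"),
   false = H_b ("Bob"). The referee is computationally unbounded. *)
Record test := Test {
  t_len : nat;
  t_next : seq hitem -> option (seq Sig);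
  t_dec : seq hitem -> bool }.

Variable R : numFieldType.

(* A responder: in round j (1-based), on request a, returns a fresh sample
   from the distribution resp j a. *)
Definition responder := nat -> forall a : seq Sig, {ffun bits (k a) -> R}.

Fixpoint acc_prob (T : test) (resp : responder) (fuel : nat) (hist : seq hitem) : R :=
  match fuel with
  | 0 => (t_dec T hist)%:R
  | f.+1 =>
      match t_next T hist with
      | None => (t_dec T hist)%:R
      | Some a => \sum_(x : bits (k a))
                    resp (size hist).+1 a x * acc_prob T resp f (rcons hist (existT _ a x))
      end
  end.

Definition prob_Ha (T : test) (resp : responder) : R := acc_prob T resp (t_len T) [::].

(* candidate is Alice or Bob with probability 1/2 each *)
Definition P_correct (T : test) (alice bob : responder) : R :=
  2^-1 * prob_Ha T alice + 2^-1 * (1 - prob_Ha T bob).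

Definition alice_resp (P : forall a, {ffun bits (k a) -> R}) : responder :=
  fun _ a => P a.

(* Bob's classical simulation scheme: on request a with (accuracy) parameter
   theta it outputs a sample of sim a theta, in run-time time a theta. *)
Definition bob_resp (sim : forall a, R -> {ffun bits (k a) -> R})
  (eps : R -> nat -> seq Sig -> R) (delta : R) : responder :=
  fun j a => sim a (eps delta j a).

Definition indistinguishable (P : forall a, {ffun bits (k a) -> R})
  (sim : forall a, R -> {ffun bits (k a) -> R}) (eps : R -> nat -> seq Sig -> R) : Prop :=
  forall delta : R, 0 < delta ->
  forall T : test, P_correct T (alice_resp P) (bob_resp sim eps delta) < 2^-1 + delta.

Definition alice_cost (n : seq Sig -> nat) (alpha : seq (seq Sig)) : R :=
  (\sum_(a <- alpha) n a)%:R.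

Definition bob_cost (time : seq Sig -> R -> R) (eps : R -> nat -> seq Sig -> R)
  (delta : R) (alpha : seq (seq Sig)) : R :=
  \sum_(j < size alpha) time (nth [::] alpha j) (eps delta j.+1 (nth [::] alpha j)).

Definition efficient (n : seq Sig -> nat) (time : seq Sig -> R -> R)
  (eps : R -> nat -> seq Sig -> R) : Prop :=
  exists f : {poly {poly R}},
  forall delta : R, 0 < delta ->
  forall alpha : seq (seq Sig),
    bob_cost time eps delta alpha <= eval2 f (alice_cost n alpha) delta^-1.

(* The scheme is an epsilon-simulator: run with the accuracy parameter set
   (by a fixed rule g) from the requested accuracy eps, it samples from a
   distribution in B(P a, eps) in time bounded by a polynomial in (n a, 1/eps). *)
Definition eps_simulator (n : seq Sig -> nat) (P : forall a, {ffun bits (k a) -> R})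
  (sim : forall a, R -> {ffun bits (k a) -> R}) (time : seq Sig -> R -> R) : Prop :=
  exists (g : R -> seq Sig -> R) (f : {poly {poly R}}),
  forall e : R, 0 < e -> forall a : seq Sig,
    L1 (sim a (g e a)) (P a) <= e /\ time a (g e a) <= eval2 f (n a)%:R e^-1.

End Testing.

From HB Require Import structures.
From mathcomp Require Import all_boot all_order all_algebra.
From mathcomp Require Import complex.
From mathcomp Require Import ring lra zify.
Set Implicit Arguments. Unset Strict Implicit. Unset Printing Implicit Defensive.
Import Order.TTheory GRing.Theory Num.Theory.
Local Open Scope ring_scope.

(* Given an epsilon-simulator, Bob answers the j-th request with accuracy
   delta/(j(j+1)).  A hybrid argument over the rounds bounds the referee's
   advantage by the telescoping sum of these accuracies, which is at most delta;
   and since every request costs Alice at least one qubit, the number of rounds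
   and each j(j+1) are polynomial in her cost.  Conversely, the one-round test
   accepting Alice exactly on the outcomes that are likelier under her
   distribution (Scheffe's test) has advantage ||P - P'||_1 / 4, so
   indistinguishability at delta = epsilon/4 makes Bob's first-round answer
   epsilon-close to Alice's, within the cost efficiency allows for a single
   request. *)

Section BornRule.
Variable R : rcfType.
Local Notation C := R[i].

Lemma sqnorm_ge0 (z : C) : 0 <= sqnorm z.
Proof. by rewrite addr_ge0 // sqr_ge0. Qed.

Lemma sqnormE (z : C) : (sqnorm z)%:C%C = z * conjc z.
Proof.
case: z => a b; rewrite /sqnorm /=; apply/eqP; rewrite eq_complex /=.
by apply/andP; split; apply/eqP; ring.
Qed.

Lemma sum_sqnorm_apply_op n (U : qop R n) (psi : {ffun bits n -> C}) :
  unitary U -> \sum_y sqnorm (apply_op U psi y) = \sum_x sqnorm (psi x).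
Proof.
move=> hU; apply: (@complexI R); rewrite !rmorph_sum /=.
under eq_bigr => y _ do rewrite sqnormE ffunE rmorph_sum mulr_suml.
under [RHS]eq_bigr => x _ do rewrite sqnormE.
have inner x x' : \sum_y U (y, x) * psi x * (U (y, x') * psi x')^* =
    psi x * (psi x')^* * (x' == x)%:R.
  rewrite -hU mulr_sumr; apply: eq_bigr => y _.
  by rewrite rmorphM /=; ring.
rewrite exchange_big /=; apply: eq_bigr => x _.
under eq_bigr => y _ do rewrite mulr_sumr.
rewrite exchange_big /= (bigD1 x) //= inner eqxx mulr1 big1 ?addr0 // => x' nx'x.
by rewrite inner (negbTE nx'x) mulr0.
Qed.

Lemma sum_sqnorm_final_state (c : qcircuit R) :
  wf_circuit c -> \sum_y sqnorm (final_state c y) = 1.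
Proof.
case=> _ hgates; rewrite /final_state.
have zero_norm : \sum_x sqnorm (zero_state R (qn c) x) = 1.
  rewrite (bigD1 [tuple of nseq (qn c) false]) //= big1 ?addr0 => [|x /negbTE nx0].
    by rewrite ffunE eqxx /sqnorm /= expr0n addr0 expr1n.
  by rewrite ffunE nx0 /sqnorm /= expr0n addr0.
elim: (gates c) (zero_state R (qn c)) zero_norm hgates => //= U gs IH psi hpsi hU.
apply: IH => [|V hV]; last by apply: hU; rewrite inE hV orbT.
by rewrite sum_sqnorm_apply_op //; exact: (hU U (mem_head _ _)).1.
Qed.

Lemma born_is_dist (c : qcircuit R) : wf_circuit c -> is_dist (born c).
Proof.
move=> hc; split=> [x|]; first by rewrite ffunE sumr_ge0 // => y _; apply: sqnorm_ge0.
rewrite -(sum_sqnorm_final_state hc).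
pose x0 : bits (qk c) := [tuple of nseq (qk c) false].
pose prefix (y : bits (qn c)) : bits (qk c) := insubd x0 (take (qk c) y).
rewrite (partition_big prefix xpredT) //=; apply: eq_bigr => x _.
rewrite ffunE; apply: eq_bigl => y.
have size_take_y : size (take (qk c) y) == qk c.
  by rewrite size_take size_tuple; case: ltngtP hc.1 => // ->.
by rewrite -(inj_eq val_inj) /prefix insubdK.
Qed.

End BornRule.

Section Distributions.
Variables (R : realFieldType) (T : finType).
Implicit Types (P Q : {ffun T -> R}) (A B : T -> R).

Lemma L1C P Q : L1 P Q = L1 Q P.
Proof. by apply: eq_bigr => x _; rewrite distrC. Qed.

Lemma expectation_ge0_le1 P A :
  is_dist P -> (forall x, 0 <= A x <= 1) -> 0 <= \sum_x P x * A x <= 1.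
Proof.
case=> P_ge0 P_sum1 A01; apply/andP; split.
  by apply: sumr_ge0 => x _; rewrite mulr_ge0 // (andP (A01 x)).1.
rewrite -P_sum1; apply: ler_sum => x _.
by rewrite ler_piMr // (andP (A01 x)).2.
Qed.

Lemma expectation_gap P Q A B e :
  is_dist Q -> (forall x, 0 <= A x <= 1) -> (forall x, `|A x - B x| <= e) ->
  `|\sum_x P x * A x - \sum_x Q x * B x| <= L1 P Q + e.
Proof.
case=> Q_ge0 Q_sum1 A01 AB_le.
have -> : \sum_x P x * A x - \sum_x Q x * B x =
    \sum_x (P x - Q x) * A x + \sum_x Q x * (A x - B x).
  by rewrite -sumrB -big_split; apply: eq_bigr => x _ /=; ring.
apply: le_trans (ler_normD _ _) _; apply: lerD.
  apply: le_trans (ler_norm_sum _ _ _) _; apply: ler_sum => x _.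
  have [A_ge0 A_le1] := andP (A01 x).
  by rewrite normrM (ger0_norm A_ge0) ler_piMr.
apply: le_trans (ler_norm_sum _ _ _) _.
rewrite -[e]mul1r -Q_sum1 mulr_suml; apply: ler_sum => x _.
by rewrite normrM ger0_norm // ler_wpM2l.
Qed.

Lemma L1_scheffe P Q : \sum_x P x = \sum_x Q x ->
  L1 Q P = 2 * \sum_(x | Q x <= P x) (P x - Q x).
Proof.
move=> sumPQ; have sumB0 : \sum_x (P x - Q x) = 0 by rewrite sumrB sumPQ subrr.
transitivity (\sum_x (`|Q x - P x| + (P x - Q x))).
  by rewrite big_split /= sumB0 addr0.
rewrite mulr_sumr [RHS]big_mkcond /=; apply: eq_bigr => x _.
by case: lerP => _; ring.
Qed.

End Distributions.

Section HypothesisTesting.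
Variables (Sig : finType) (k : seq Sig -> nat) (R : realFieldType).
Implicit Types (T : test k) (r : responder k R).

Definition dist_responder r := forall j a, is_dist (r j a).

Lemma acc_prob_ge0_le1 T r : dist_responder r ->
  forall f hist, 0 <= acc_prob T r f hist <= 1.
Proof.
move=> r_dist; elim=> [|f IH] hist /=; first by case: t_dec; rewrite ?ler01 ?lexx.
case: t_next => [a|]; last by case: t_dec; rewrite ?ler01 ?lexx.
exact: expectation_ge0_le1.
Qed.

Lemma partial_fraction_succ (d : R) n :
  d / (n.+1 * n.+2)%:R + d / n.+2%:R = d / n.+1%:R.
Proof.
rewrite -[n.+2]addn1 -[n.+1]addn1 !natrM !natrD.
by field; rewrite !natr1 !pnatr_eq0.
Qed.

(* Accuracy d/(j(j+1)) in round j telescopes: the error budget d/(s+1) left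
   after s rounds splits into d/((s+1)(s+2)) for the next round and d/(s+2)
   for the remaining ones. *)
Lemma acc_prob_hybrid T r1 r2 (d : R) :
  0 <= d -> dist_responder r1 -> dist_responder r2 ->
  (forall j a, L1 (r1 j.+1 a) (r2 j.+1 a) <= d / (j.+1 * j.+2)%:R) ->
  forall f hist,
  `|acc_prob T r1 f hist - acc_prob T r2 f hist| <= d / (size hist).+1%:R.
Proof.
move=> d_ge0 r1_dist r2_dist r12_close; elim=> [|f IH] hist /=.
  by rewrite subrr normr0 divr_ge0.
case: t_next => [a|]; last by rewrite subrr normr0 divr_ge0.
have IH_next x : `|acc_prob T r1 f (rcons hist (existT _ a x)) -
                   acc_prob T r2 f (rcons hist (existT _ a x))| <= d / (size hist).+2%:R.
  by have := IH (rcons hist (existT _ a x)); rewrite size_rcons.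
apply: le_trans (expectation_gap _ (r2_dist _ a)
  (fun x => acc_prob_ge0_le1 T r1_dist f _) IH_next) _.
by rewrite -[leRHS]partial_fraction_succ lerD2r.
Qed.

Lemma P_correctE T r1 r2 :
  P_correct T r1 r2 = 2^-1 + 2^-1 * (prob_Ha T r1 - prob_Ha T r2).
Proof. by rewrite /P_correct; ring. Qed.

Lemma indistinguishable_of_close (P : forall a, {ffun bits (k a) -> R}) sim eps :
  (forall a, is_dist (P a)) -> (forall a t, is_dist (sim a t)) ->
  (forall d, 0 < d -> forall j a,
     L1 (sim a (eps d j.+1 a)) (P a) <= d / (j.+1 * j.+2)%:R) ->
  indistinguishable P sim eps.
Proof.
move=> P_dist sim_dist sim_close d d_gt0 T.
have close j a :
    L1 (alice_resp P j.+1 a) (bob_resp sim eps d j.+1 a) <= d / (j.+1 * j.+2)%:R.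
  by rewrite L1C; exact: sim_close.
have := acc_prob_hybrid T (ltW d_gt0) (fun _ => P_dist) (fun _ _ => sim_dist _ _)
  close (t_len T) [::].
rewrite divr1 P_correctE /prob_Ha => /(le_trans (ler_norm _)); lra.
Qed.

Definition one_shot_test a (A : {pred bits (k a)}) : test k :=
  Test 1 (fun _ => Some a)
    (fun h => [exists x, (h == [:: Tagged (fun a => bits (k a)) x]) && (x \in A)]).

Lemma prob_Ha_one_shot_test a A r :
  prob_Ha (one_shot_test A) r = \sum_(x in A) r 1%N a x.
Proof.
rewrite /prob_Ha /= [RHS]big_mkcond; apply: eq_bigr => x _.
have -> : [exists y, ([:: Tagged (fun a => bits (k a)) x] ==
                      [:: Tagged (fun a => bits (k a)) y]) && (y \in A)] = (x \in A).
  apply/existsP/idP => [[y /andP [+ yA]] | xA]; last by exists x; rewrite eqxx.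
  by rewrite eqseq_cons andbT eq_Tagged /= => /eqP ->.
by case: (x \in A); rewrite ?mulr1 ?mulr0.
Qed.

Lemma L1_lt_of_indistinguishable (P : forall a, {ffun bits (k a) -> R}) sim eps a d :
  is_dist (P a) -> (forall t, is_dist (sim a t)) -> 0 < d ->
  indistinguishable P sim eps -> L1 (sim a (eps d 1%N a)) (P a) < 4 * d.
Proof.
move=> [_ P_sum1] sim_dist d_gt0.
set Q := sim a _; have [_ Q_sum1] := sim_dist (eps d 1%N a).
move=> /(_ d d_gt0 (one_shot_test [pred x | Q x <= P a x])).
rewrite P_correctE !prob_Ha_one_shot_test /alice_resp /bob_resp -/Q -sumrB.
rewrite (L1_scheffe (_ : \sum_x P a x = \sum_x Q x)) ?P_sum1 ?Q_sum1 //=; lra.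
Qed.

End HypothesisTesting.

Section PolynomialBounds.
Variable R : realFieldType.
Implicit Types (p : {poly R}) (f : {poly {poly R}}) (x y : R).

Lemma lerXn2_ge1 x y m n : 0 <= x <= y -> 1 <= y -> (m <= n)%N -> x ^+ m <= y ^+ n.
Proof.
case/andP=> x_ge0 x_le_y y_ge1 mn; apply: (@le_trans _ _ (y ^+ m)).
  by rewrite lerXn2r // nnegrE (le_trans x_ge0).
exact: ler_weXn2l.
Qed.

Definition coef_norm p := \sum_(i < size p) `|p`_i|.

Lemma coef_norm_ge0 p : 0 <= coef_norm p.
Proof. exact: sumr_ge0. Qed.

Lemma norm_horner_le p x y n : 0 <= x <= y -> 1 <= y -> (size p <= n)%N ->
  `|p.[x]| <= coef_norm p * y ^+ n.
Proof.
move=> x_itv y_ge1 size_le; rewrite horner_coef /coef_norm mulr_suml.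
apply: le_trans (ler_norm_sum _ _ _) _; apply: ler_sum => i _.
rewrite normrM normrX (ger0_norm (andP x_itv).1) ler_wpM2l // lerXn2_ge1 //.
exact: leq_trans (ltnW (ltn_ord i)) size_le.
Qed.

Lemma eval2E f x y : eval2 f x y = \sum_(i < size f) (f`_i).[x] * y ^+ i.
Proof.
rewrite /eval2 (horner_coef f) horner_sum; apply: eq_bigr => i _.
by rewrite hornerM -rmorphXn /= hornerC.
Qed.

Lemma eval2_comp_scale f c x y :
  eval2 (f \Po (c%:P%:P * 'X)) x y = eval2 f x (c * y).
Proof. by rewrite /eval2 horner_comp hornerM hornerC hornerX polyCM. Qed.

Definition coef_norm2 f := \sum_(i < size f) coef_norm f`_i.

Lemma coef_norm2_ge0 f : 0 <= coef_norm2 f.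
Proof. by apply: sumr_ge0 => i _; apply: coef_norm_ge0. Qed.

Definition size2 f := (size f + \sum_(i < size f) size (f`_i)%R)%N.

Lemma eval2_le f x y x' y' : 0 <= x <= x' -> 0 <= y <= y' ->
  eval2 f x y <= coef_norm2 f * ((1 + x') ^+ size2 f * (1 + y') ^+ size2 f).
Proof.
move=> /andP[x_ge0 x_le] /andP[y_ge0 y_le].
have x_itv : 0 <= x <= 1 + x' by rewrite x_ge0 /=; lra.
have y_itv : 0 <= y <= 1 + y' by rewrite y_ge0 /=; lra.
have x'_ge : 1 <= 1 + x' by lra.
have y'_ge : 1 <= 1 + y' by lra.
rewrite eval2E /coef_norm2 mulr_suml.
apply: le_trans (ler_norm _) _; apply: le_trans (ler_norm_sum _ _ _) _.
apply: ler_sum => i _; rewrite normrM normrX (ger0_norm y_ge0) mulrA.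
apply: ler_pM; rewrite ?exprn_ge0 //.
  by rewrite norm_horner_le // /size2 (bigD1 i) //= addnCA leq_addr.
by apply: lerXn2_ge1 => //; apply: leq_trans (ltnW (ltn_ord i)) (leq_addr _ _).
Qed.

End PolynomialBounds.

Lemma efficient_of_time_bound (R : realFieldType) (Sig : finType) (n : seq Sig -> nat)
    (time : seq Sig -> R -> R) (g : R -> seq Sig -> R) (f : {poly {poly R}}) :
  (forall a, 0 < n a)%N ->
  (forall e, 0 < e -> forall a, time a (g e a) <= eval2 f (n a)%:R e^-1) ->
  efficient n time (fun d j a => g (d / (j * j.+1)%:R) a).
Proof.
move=> n_gt0 time_le; set K := coef_norm2 f; set D := size2 f.
(* With N Alice's cost, there are at most N rounds, round j+1 has
   (j+1)(j+2) <= N(N+1), so each costs at most M below. *)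
set F := (K *: ('X * (1 + 'X) ^+ D))%:P * (1 + ('X * ('X + 1))%:P * 'X) ^+ D.
exists F => d d_gt0 alpha; set N := (\sum_(a <- alpha) n a)%N.
have size_le : (size alpha <= N)%N by rewrite -sum1_size; apply: leq_sum.
set M := K * ((1 + N%:R) ^+ D * (1 + (N * N.+1)%:R / d) ^+ D).
have M_ge0 : 0 <= M.
  by rewrite mulr_ge0 ?coef_norm2_ge0 // mulr_ge0 // exprn_ge0 // addr_ge0 // divr_ge0 // ltW.
have -> : eval2 F (alice_cost R n alpha) d^-1 = N%:R * M.
  rewrite /eval2 /alice_cost /F /M -!polyC1.
  rewrite !(hornerM, hornerD, hornerC, horner_exp, hornerX, hornerZ) natrM -natr1.
  by rewrite -/N; ring.
rewrite /bob_cost; apply: (@le_trans _ _ (\sum_(j < size alpha) M)).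
  apply: ler_sum => j _; set a := nth [::] alpha j.
  apply: le_trans (time_le _ _ a) _; first by rewrite divr_gt0 // ltr0n muln_gt0.
  have j_lt := ltn_ord j.
  rewrite invf_div; apply: eval2_le; apply/andP; split => //.
  - by rewrite ler_nat /N (big_nth [::]) big_mkord (bigD1 j) //= leq_addr.
  - by rewrite divr_ge0 // ltW.
  - by rewrite ler_pM2r ?invr_gt0 // ler_nat; nia.
by rewrite sumr_const card_ord -[M *+ _]mulr_natl ler_wpM2r // ler_nat.
Qed.

Lemma time_le_of_efficient (R : realFieldType) (Sig : finType) (n : seq Sig -> nat)
    (time : seq Sig -> R -> R) (eps : R -> nat -> seq Sig -> R) :
  efficient n time eps ->
  exists f : {poly {poly R}},
    forall d, 0 < d -> forall a, time a (eps d 1%N a) <= eval2 f (n a)%:R d^-1.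
Proof.
case=> f f_bound; exists f => d d_gt0 a.
by have := f_bound d d_gt0 [:: a]; rewrite /bob_cost /alice_cost big_ord1 big_seq1.
Qed.

Theorem theorem1 (R : rcfType) (Sig : finType)
  (c : seq Sig -> qcircuit R)
  (hwf : forall a, wf_circuit (c a))
  (hn : forall a, (0 < qn (c a))%N)
  (psize : {poly R}) (hsize : forall a, (qsize (c a))%:R <= psize.[(qn (c a))%:R])
  (sim : forall a : seq Sig, R -> {ffun bits (qk (c a)) -> R})
  (time : seq Sig -> R -> R)
  (hsim : forall a theta, is_dist (sim a theta)) :
  eps_simulator (fun a => qn (c a)) (fun a => born (c a)) sim time <->
  exists eps : R -> nat -> seq Sig -> R,
    indistinguishable (fun a => born (c a)) sim eps /\
    efficient (fun a => qn (c a)) time eps.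
Proof.
have born_dist a : is_dist (born (c a)) by exact: born_is_dist.
split=> [[g [f sim_spec]] | [eps [indist eff]]].
  exists (fun d j a => g (d / (j * j.+1)%:R) a); split.
    apply: indistinguishable_of_close => // d d_gt0 j a.
    by apply: (sim_spec _ _ a).1; rewrite divr_gt0 // ltr0n muln_gt0.
  by apply: efficient_of_time_bound => // e e_gt0 a; exact: (sim_spec e e_gt0 a).2.
have [f time_le] := time_le_of_efficient eff.
exists (fun e a => eps (e / 4) 1%N a), (f \Po ((4 : R)%:P%:P * 'X)) => e e_gt0 a.
have d_gt0 : 0 < e / 4 by rewrite divr_gt0.
split; last by rewrite eval2_comp_scale; have := time_le _ d_gt0 a; rewrite invf_div.
have := L1_lt_of_indistinguishable (born_dist a) (hsim a) d_gt0 indist.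
by rewrite [_ * (e / 4)]mulrC divfK ?pnatr_eq0 // => /ltW.
Qed.
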